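(* Let $\Gamma$ be a finitely generated group that contains an infinite acentral subgroup $A$ of infinite index in $\Gamma$. Then $\Gamma$ is not presentable by a product.
   Context: A subgroup $A$ of a group $\Gamma$ is called acentral if for every $g\in A\setminus\{1\}$ the centraliser $C_\Gamma(g)$ is contained in $A$. An infinite group $\Gamma$ is not presentable by a product if for every homomorphism $\varphi\colon \Gamma_1\times\Gamma_2\to\Gamma$ whose image has finite index in $\Gamma$, at least one of the images $\varphi(\Gamma_1)$, $\varphi(\Gamma_2)$ is finite; an infinite group is presentable by a product if it is not ''not presentable by a product''. *)

From Stdlib Require Import List.
Import ListNotations.

Record Group : Type := MkGroup {
  carrier :> Type;
  gmul : carrier -> carrier -> carrier;
  gone : carrier;
  ginv : carrier -> carrier;
  gmulA : forall x y z, gmul x (gmul y z) = gmul (gmul x y) z;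
  gmul1l : forall x, gmul gone x = x;
  gmul1r : forall x, gmul x gone = x;
  gmulVl : forall x, gmul (ginv x) x = gone;
  gmulVr : forall x, gmul x (ginv x) = gone
}.

Arguments gmul {g} _ _.
Arguments gone {g}.
Arguments ginv {g} _.

Definition prod_group (G1 G2 : Group) : Group.
Proof.
refine (@MkGroup (G1 * G2)%type
  (fun x y => (gmul (fst x) (fst y), gmul (snd x) (snd y)))
  (gone, gone)
  (fun x => (ginv (fst x), ginv (snd x))) _ _ _ _ _).
- intros [a b] [c d] [e f]; simpl; now rewrite !gmulA.
- intros [a b]; simpl; now rewrite !gmul1l.
- intros [a b]; simpl; now rewrite !gmul1r.
- intros [a b]; simpl; now rewrite !gmulVl.
- intros [a b]; simpl; now rewrite !gmulVr.
Defined.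

Definition is_hom {G H : Group} (f : G -> H) : Prop :=
  forall x y : G, f (gmul x y) = gmul (f x) (f y).

Definition is_subgroup {G : Group} (A : G -> Prop) : Prop :=
  A gone /\ (forall x y, A x -> A y -> A (gmul x y)) /\ (forall x, A x -> A (ginv x)).

Definition finite_set {G : Type} (A : G -> Prop) : Prop :=
  exists l : list G, forall x, A x -> In x l.

Definition infinite_set {G : Type} (A : G -> Prop) : Prop := ~ finite_set A.

Definition infinite_group (G : Group) : Prop := infinite_set (fun _ : G => True).

Definition generated {G : Group} (S : G -> Prop) : G -> Prop :=
  fun g => forall B : G -> Prop, is_subgroup B -> (forall s, S s -> B s) -> B g.

Definition finitely_generated (G : Group) : Prop :=
  exists l : list G, forall g : G, generated (fun s => In s l) g.

Definition finite_index {G : Group} (A : G -> Prop) : Prop :=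
  exists l : list G, forall g : G, exists x, In x l /\ exists a, A a /\ g = gmul x a.

Definition infinite_index {G : Group} (A : G -> Prop) : Prop := ~ finite_index A.

Definition centraliser {G : Group} (g : G) : G -> Prop :=
  fun h => gmul h g = gmul g h.

Definition acentral {G : Group} (A : G -> Prop) : Prop :=
  forall g, A g -> g <> gone -> forall h, centraliser g h -> A h.

Definition image {X Y : Type} (f : X -> Y) : Y -> Prop :=
  fun y => exists x, f x = y.

Definition not_presentable_by_product (G : Group) : Prop :=
  infinite_group G /\
  forall (G1 G2 : Group) (phi : prod_group G1 G2 -> G),
    is_hom phi ->
    finite_index (image phi) ->
    finite_set (image (fun g1 : G1 => phi (g1, (gone : G2)))) \/
    finite_set (image (fun g2 : G2 => phi ((gone : G1), g2))).

(* Let [phi : G1 x G2 -> Gamma] have image of finite index. The image meets the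
   infinite subgroup [A] in an infinite set, so it contains some [a <> 1] of [A].
   Writing [a = h1 h2] with [h1] in [phi(G1)] and [h2] in [phi(G2)], the two
   commuting factors centralise [a], hence lie in [A] by acentrality, and one of
   them, say [h1], is nontrivial. Then [A] contains the centraliser of [h1], hence
   all of [phi(G2)]; if [phi(G2)] is infinite it has a nontrivial element, and the
   same argument puts all of [phi(G1)] into [A]. So [A] would contain the image of
   [phi] and have finite index. *)

From Stdlib Require Import List Classical.
Import ListNotations.

Section GroupFacts.
Context {G : Group}.

Lemma gmulKl (x y : G) : gmul (ginv x) (gmul x y) = y.
Proof. now rewrite gmulA, gmulVl, gmul1l. Qed.

Lemma ginv_unique (u v : G) : gmul u v = gone -> u = ginv v.
Proof.
intro Huv. now rewrite <- (gmul1r _ u), <- (gmulVr _ v), gmulA, Huv, gmul1l.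
Qed.

Lemma idempotent_one (x : G) : gmul x x = x -> x = gone.
Proof. intro Hx. now rewrite <- (gmulKl x x), Hx, gmulVl. Qed.

End GroupFacts.

Lemma hom_one {G H : Group} (f : G -> H) : is_hom f -> f gone = gone.
Proof. intro Hf. apply idempotent_one. now rewrite <- Hf, gmul1l. Qed.

Lemma hom_inv {G H : Group} (f : G -> H) :
  is_hom f -> forall x, f (ginv x) = ginv (f x).
Proof. intros Hf x. apply ginv_unique. rewrite <- Hf, gmulVl. now apply hom_one. Qed.

Lemma image_hom_subgroup {G H : Group} (f : G -> H) :
  is_hom f -> is_subgroup (image f).
Proof.
intro Hf. repeat split.
- exists gone. now apply hom_one.
- intros x y [u <-] [v <-]. exists (gmul u v). apply Hf.
- intros x [u <-]. exists (ginv u). now apply hom_inv.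
Qed.

Lemma finite_subset {X : Type} (S T : X -> Prop) :
  (forall x, S x -> T x) -> finite_set T -> finite_set S.
Proof. intros HST [l Hl]. exists l. auto. Qed.

Lemma exists_other_of_infinite {X : Type} (S : X -> Prop) (e : X) :
  infinite_set S -> exists s, S s /\ s <> e.
Proof.
intro Hinf. apply NNPP. intro Hnone. apply Hinf. exists [e]. intros x Hx.
left. apply NNPP. intro Hne. apply Hnone. now exists x.
Qed.

Lemma list_choice {X Y : Type} (P : X -> Y -> Prop) (L : list X) :
  exists R : list Y, forall x, In x L -> (exists y, P x y) -> exists y, In y R /\ P x y.
Proof.
induction L as [|x0 L [R HR]].
- exists []. intros x [].
- destruct (classic (exists y, P x0 y)) as [[y Hy]|Hnone].
  + exists (y :: R). intros x [<-|Hx] Hex.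
    * exists y. split; [left|]; auto.
    * destruct (HR x Hx Hex) as [r [Hr HPr]]. exists r. split; [right|]; auto.
  + exists R. intros x [<-|Hx] Hex; [contradiction|auto].
Qed.

Lemma finite_index_mono {G : Group} (H A : G -> Prop) :
  (forall x, H x -> A x) -> finite_index H -> finite_index A.
Proof.
intros HHA [L HL]. exists L. intro g.
destruct (HL g) as [x [Hx [m [Hm Hg]]]]. exists x. split; [exact Hx|]. exists m. auto.
Qed.

(* [A] is covered by the translates [r (A /\ H)], one [r] chosen in each coset
   [x H] that meets [A]. *)
Lemma finite_of_finite_meet {G : Group} (A H : G -> Prop) :
  is_subgroup A -> is_subgroup H -> finite_index H ->
  finite_set (fun a => A a /\ H a) -> finite_set A.
Proof.
intros [_ [HAmul HAinv]] [_ [HHmul HHinv]] [L HL] [l Hl].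
destruct (list_choice (fun x r => A r /\ exists m, H m /\ r = gmul x m) L) as [R HR].
exists (flat_map (fun r => map (gmul r) l) R).
intros a Ha. destruct (HL a) as [x [Hx [m [Hm Ha_eq]]]].
destruct (HR x Hx) as [r [Hr [HrA [m' [Hm' Hr_eq]]]]]; [now exists a; eauto|].
set (c := gmul (ginv m') m).
assert (Hac : a = gmul r c).
{ unfold c. now rewrite Hr_eq, Ha_eq, <- gmulA, (gmulA _ m'), gmulVr, gmul1l. }
apply in_flat_map. exists r. split; [exact Hr|].
apply in_map_iff. exists c. split; [now symmetry|]. apply Hl. split.
- replace c with (gmul (ginv r) a) by (rewrite Hac; apply gmulKl). auto.
- unfold c. auto.
Qed.

Lemma acentral_commuting_factors {G : Group} (A : G -> Prop) (u v : G) :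
  acentral A -> gmul u v = gmul v u ->
  A (gmul u v) -> gmul u v <> gone -> A u /\ A v.
Proof.
intros Hac Huv HA Hne. split; apply (Hac _ HA Hne); unfold centraliser.
- now rewrite <- gmulA, <- Huv.
- now rewrite gmulA, <- Huv.
Qed.

Section ProductHom.
Variables (G1 G2 G : Group) (phi : prod_group G1 G2 -> G).
Hypothesis phi_hom : is_hom phi.

Lemma hom_prod_split_l (x : G1) (y : G2) :
  phi (x, y) = gmul (phi (x, gone)) (phi (gone, y)).
Proof. rewrite <- phi_hom. simpl. now rewrite gmul1r, gmul1l. Qed.

Lemma hom_prod_split_r (x : G1) (y : G2) :
  phi (x, y) = gmul (phi (gone, y)) (phi (x, gone)).
Proof. rewrite <- phi_hom. simpl. now rewrite gmul1r, gmul1l. Qed.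

Lemma hom_prod_factors_commute (x : G1) (y : G2) :
  gmul (phi (x, gone)) (phi (gone, y)) = gmul (phi (gone, y)) (phi (x, gone)).
Proof. now rewrite <- hom_prod_split_l, <- hom_prod_split_r. Qed.

Variable A : G -> Prop.
Hypothesis A_subgroup : is_subgroup A.
Hypothesis A_acentral : acentral A.

Lemma acentral_right_of_left (x : G1) :
  A (phi (x, gone)) -> phi (x, gone) <> gone -> forall y, A (phi (gone, y)).
Proof.
intros Hx Hne y. apply (A_acentral _ Hx Hne). unfold centraliser.
symmetry. apply hom_prod_factors_commute.
Qed.

Lemma acentral_left_of_right (y : G2) :
  A (phi (gone, y)) -> phi (gone, y) <> gone -> forall x, A (phi (x, gone)).
Proof.
intros Hy Hne x. apply (A_acentral _ Hy Hne). unfold centraliser.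
apply hom_prod_factors_commute.
Qed.

Lemma acentral_contains_image (p : prod_group G1 G2) :
  A (phi p) -> phi p <> gone ->
  infinite_set (image (fun x : G1 => phi (x, gone))) ->
  infinite_set (image (fun y : G2 => phi (gone, y))) ->
  forall q, A (phi q).
Proof.
destruct p as [x y]. intros Hp Hne Hinf1 Hinf2.
rewrite hom_prod_split_l in Hp, Hne.
destruct (acentral_commuting_factors A _ _ A_acentral
            (hom_prod_factors_commute x y) Hp Hne) as [Hx Hy].
assert (Hall : (forall x', A (phi (x', gone))) /\ (forall y', A (phi (gone, y')))).
{ destruct (classic (phi (x, gone) = gone)) as [Hx1|Hx1].
  - assert (Hy1 : phi (gone, y) <> gone) by (intro Hy1; apply Hne; now rewrite Hx1, Hy1, gmul1l).
    destruct (exists_other_of_infinite _ gone Hinf1) as [b [[x' <-] Hb]].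
    pose proof (acentral_left_of_right y Hy Hy1) as Hleft.
    split; [exact Hleft|]. exact (acentral_right_of_left x' (Hleft x') Hb).
  - destruct (exists_other_of_infinite _ gone Hinf2) as [b [[y' <-] Hb]].
    pose proof (acentral_right_of_left x Hx Hx1) as Hright.
    split; [|exact Hright]. exact (acentral_left_of_right y' (Hright y') Hb). }
destruct Hall as [Hleft Hright]. destruct A_subgroup as [_ [A_mul _]].
intros [x' y']. rewrite hom_prod_split_l. auto.
Qed.

End ProductHom.

Theorem proposition3p2 (G : Group) (A : G -> Prop) :
  finitely_generated G ->
  is_subgroup A ->
  infinite_set A ->
  acentral A ->
  infinite_index A ->
  not_presentable_by_product G.
Proof.
intros _ HA Hinf Hac Hidx. split.
{ intro Hfin. apply Hinf. exact (finite_subset A _ (fun _ _ => I) Hfin). }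
intros G1 G2 phi Hphi Hphi_idx.
destruct (classic (finite_set (image (fun x : G1 => phi (x, gone))))) as [Hfin1|Hinf1];
  [now left|].
destruct (classic (finite_set (image (fun y : G2 => phi (gone, y))))) as [Hfin2|Hinf2];
  [now right|].
exfalso.
assert (Hmeet : infinite_set (fun a => A a /\ image phi a)).
{ intro Hfin. apply Hinf.
  exact (finite_of_finite_meet A (image phi) HA (image_hom_subgroup phi Hphi) Hphi_idx Hfin). }
destruct (exists_other_of_infinite _ gone Hmeet) as [a [[Ha [p <-]] Hne]].
apply Hidx. apply (finite_index_mono (image phi)); [|exact Hphi_idx].
intros g [q <-]. exact (acentral_contains_image G1 G2 G phi Hphi A HA Hac p Ha Hne Hinf1 Hinf2 q).
Qed.
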